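(* For each integer $n \ge 3$, define $D_{a,n} = \overline{D}(1 + 5\cdot 2^{2n}, 2^{-(2n+3)})$ and $D_{b,n} = \overline{D}(1+7\cdot 2^{2n}, 2^{-(2n+3)})$. If $t \in \mathbb{Q}_2$ lies in $D_{a,n}$ or in $D_{b,n}$ for some $n \ge 3$, then $f_t$ is post-critically bounded. Equivalently, the forward orbit of $1$ under $f_t$ is bounded.
   Context: Let $|\cdot|$ denote the $2$-adic absolute value on $\mathbb{C}_2$, normalized by $|2| = 1/2$. The notation $\overline{D}(a,\delta)$ denotes the closed disk $\{z \in \mathbb{C}_2 : |z-a| \le \delta\}$. For $t \in \mathbb{C}_2$, let $f_t(z) = -\tfrac32 t(-2z^3+3z^2)+1$. Its critical points are $0$ and $1$, and $f_t(0)=1$. Post-critically bounded means that both critical points have bounded forward orbits. *)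

(* Q_2 is modelled as the completion of Q for the 2-adic
   absolute value: an element of Q_2 is represented by a 2-adic Cauchy
   sequence of rationals; ring operations on Q_2 are computed termwise. *)
From mathcomp Require Import all_boot all_order all_algebra.
Set Implicit Arguments. Unset Strict Implicit. Unset Printing Implicit Defensive.
Import Order.TTheory GRing.Theory Num.Theory.
Local Open Scope ring_scope.

Definition abs2 (x : rat) : rat :=
  if x == 0 then 0
  else (2%:Q ^+ logn 2 `|denq x|%N) / (2%:Q ^+ logn 2 `|numq x|%N).

Definition cauchy2 (u : nat -> rat) : Prop :=
  forall eps : rat, 0 < eps ->
    exists N : nat, forall m n : nat, (N <= m)%N -> (N <= n)%N ->
      abs2 (u m - u n) < eps.

(* For a 2-adic Cauchy sequence u representing x in Q_2 and d > 0,
   |x| <= d  iff  eventually |u k|_2 <= d (the values |u k|_2 are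
   eventually constant or tend to 0). *)
Definition abs2_le (u : nat -> rat) (d : rat) : Prop :=
  exists N : nat, forall k : nat, (N <= k)%N -> abs2 (u k) <= d.

Definition in_cdisk (u : nat -> rat) (a d : rat) : Prop :=
  abs2_le (fun k => u k - a) d.

Definition f (t z : rat) : rat :=
  - (3%:Q / 2%:Q) * t * (- 2%:Q * z ^+ 3 + 3%:Q * z ^+ 2) + 1.

(* The m-th forward iterate f_t^m(z0), for t in Q_2 represented by the
   Cauchy sequence t and z0 in Q: represented termwise (polynomial maps are
   continuous, so this is a Cauchy sequence representing f_t^m(z0)). *)
Definition orbit (t : nat -> rat) (z0 : rat) (m : nat) : nat -> rat :=
  fun k => iter m (f (t k)) z0.

Definition orbit_bounded (t : nat -> rat) (z0 : rat) : Prop :=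
  exists M : rat, forall m : nat, abs2_le (orbit t z0 m) M.

(* f_t is post-critically bounded: both critical points 0 and 1 have
   bounded forward orbits. *)
Definition pcb (t : nat -> rat) : Prop :=
  orbit_bounded t 0 /\ orbit_bounded t 1.

Definition radius (n : nat) : rat := (2%:Q ^+ (2 * n + 3))^-1.
Definition center_a (n : nat) : rat := 1 + 5%:Q * 2%:Q ^+ (2 * n).
Definition center_b (n : nat) : rat := 1 + 7%:Q * 2%:Q ^+ (2 * n).

From mathcomp Require Import all_boot all_order all_algebra.
From mathcomp Require Import ring.
Set Implicit Arguments. Unset Strict Implicit. Unset Printing Implicit Defensive.
Import Order.TTheory GRing.Theory Num.Theory.
Local Open Scope ring_scope.

(* With w = 2 z the map f_t becomes g_t(w) = (3 t w^2 (w - 3) + 8) / 4 and the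
   orbit of the critical point 1 becomes that of w = 2; it suffices that this
   orbit stays in Z_(2), since then |z| <= 2 along it.
   Write t = 1 + 4^n eta with eta = 5 or 7 mod 8.  Then
   g_t(g_t(2)) = -1 + 4^(n-1) b with b = 5 or 7 mod 8.  The point -1 is a
   repelling fixed point of g_1 (multiplier 27/4), and while 16 M divides t - 1,
   g_t sends -1 + 4 M b to -1 + M b' with b' again 5 or 7 mod 8: the orbit
   leaves -1 one power of 4 at a time.  It finally reaches -1 + b, which lies in
   the set of w congruent to 19 mod 32, 6 mod 8 or 4 mod 8; g_t maps that set
   into itself as soon as t = 1 mod 32. *)

Definition Z2 (x : rat) : Prop :=
  exists (a : int) (b : nat), odd b /\ x = a%:~R / b%:R.

Lemma natr_odd_neq0 (b : nat) : odd b -> (b%:R : rat) != 0.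
Proof. by move=> ob; rewrite pnatr_eq0; case: b ob. Qed.

Lemma Z2_nat (n : nat) : Z2 n%:R.
Proof. by exists n%:Z, 1%N; rewrite divr1. Qed.

Lemma Z2_add x y : Z2 x -> Z2 y -> Z2 (x + y).
Proof.
move=> [a1 [b1 [o1 ->]]] [a2 [b2 [o2 ->]]].
exists (a1 * b2%:Z + a2 * b1%:Z), (b1 * b2)%N; split; first by rewrite oddM o1 o2.
rewrite natrM rmorphD !rmorphM /=.
by field; rewrite !natr_odd_neq0.
Qed.

Lemma Z2_mul x y : Z2 x -> Z2 y -> Z2 (x * y).
Proof.
move=> [a1 [b1 [o1 ->]]] [a2 [b2 [o2 ->]]].
exists (a1 * a2), (b1 * b2)%N; split; first by rewrite oddM o1 o2.
rewrite natrM rmorphM /=.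
by field; rewrite !natr_odd_neq0.
Qed.

Lemma Z2_opp x : Z2 x -> Z2 (- x).
Proof. by move=> [a [b [ob ->]]]; exists (- a), b; rewrite rmorphN mulNr. Qed.

Lemma Z2_exp x n : Z2 x -> Z2 (x ^+ n).
Proof.
move=> Zx; elim: n => [|n IH]; first exact: (Z2_nat 1).
by rewrite exprS; apply: Z2_mul.
Qed.

Ltac z2 := repeat match goal with
 | |- Z2 (_ + _) => apply: Z2_add
 | |- Z2 (_ * _) => apply: Z2_mul
 | |- Z2 (- _) => apply: Z2_opp
 | |- Z2 (_ ^+ _) => apply: Z2_exp
 | |- Z2 1 => exact: (Z2_nat 1)
 | |- Z2 (_%:R) => apply: Z2_nat
 | |- Z2 _ => assumption
 end.

Lemma Z2_even_or_odd y : Z2 y -> exists2 y1, Z2 y1 & y = 2 * y1 \/ y = 1 + 2 * y1.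
Proof.
move=> [a [b [ob ->]]].
have bR0 := natr_odd_neq0 ob.
have b_half : (b%:R : rat) = 2 * (b./2)%:R + 1.
  by rewrite -{1}(odd_double_half b) ob natrD -muln2 natrM /=; ring.
have a_divmod := divz_eq a 2.
have [a_even|a_odd] : (a %% 2)%Z = 0 \/ (a %% 2)%Z = 1.
  have : (0 <= a %% 2)%Z && (a %% 2 < 2)%Z by rewrite modz_ge0 // ltz_pmod.
  by case: (a %% 2)%Z => [[|[|]]|]; auto.
- exists ((a %/ 2)%Z%:~R / b%:R); first by exists (a %/ 2)%Z, b.
  left; rewrite {1}a_divmod a_even addr0 rmorphM /=.
  by field.
- exists (((a %/ 2)%Z - (b./2)%:Z)%:~R / b%:R); first by exists ((a %/ 2)%Z - (b./2)%:Z), b.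
  right; rewrite {1}a_divmod a_odd rmorphD rmorphM rmorphB /=.
  by rewrite b_half in bR0 *; field.
Qed.

Lemma abs2_le_denq x : abs2 x <= 2%:Q ^+ logn 2 `|denq x|.
Proof.
rewrite /abs2; case: eqP => _; first exact/ltW/exprn_gt0.
rewrite ler_pdivrMr ?exprn_gt0 // ler_peMr ?exprn_ge1 ?exprn_ge0 //.
by rewrite exprn_ege1.
Qed.

Lemma denq_dvd (a : int) (b : nat) : (0 < b)%N -> (`|denq (a%:~R / b%:R)| %| b)%N.
Proof.
move=> b_gt0; set x := _ / _.
have cross : numq x * b%:Z = a * denq x.
  apply: (@intr_inj rat); rewrite !rmorphM /=.
  by apply/eqP; rewrite -eqr_div ?intr_eq0 ?denq_neq0 ?divq_num_den // -lt0n.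
rewrite -(@Gauss_dvdr _ `|numq x|) 1?coprime_sym ?coprime_num_den //.
by have := congr1 absz cross; rewrite !abszM absz_nat => ->; apply: dvdn_mull.
Qed.

Lemma abs2_half_le w : Z2 w -> abs2 (w / 2) <= 2.
Proof.
move=> [a [b [ob ->]]].
have b_gt0 : (0 < b)%N by case: b ob.
have -> : a%:~R / b%:R / 2 = a%:~R / (2 * b)%:R :> rat.
  by rewrite natrM; field; rewrite natr_odd_neq0.
apply: le_trans (abs2_le_denq _) _.
have log2b : logn 2 (2 * b) = 1%N.
  by rewrite lognM // logn_prime // logn_coprime ?coprime2n.
rewrite -[X in _ <= X]expr1 ler_eXn2l // -[X in (_ <= X)%N]log2b.
by apply: dvdn_leq_log; [rewrite muln_gt0 | apply: denq_dvd; rewrite muln_gt0].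
Qed.

Lemma logn2_abs2_le x K : x != 0 -> abs2 x <= (2%:Q ^+ K)^-1 ->
  (logn 2 `|denq x| + K <= logn 2 `|numq x|)%N.
Proof.
rewrite /abs2 => /negPf ->.
rewrite ler_pdivrMr ?exprn_gt0 // mulrC ler_pdivlMr ?exprn_gt0 // -exprD.
by rewrite ler_eXn2l.
Qed.

Lemma Z2_div_pow2 x K : odd `|denq x| -> (2 ^ K %| `|numq x|)%N -> Z2 (x / 2%:Q ^+ K).
Proof.
move=> odd_den dvd_num.
have /dvdzP [q num_q] : ((2 ^ K)%N%:Z %| numq x)%Z := dvd_num.
exists q, `|denq x|%N; split => //.
rewrite -{1}(divq_num_den x) num_q natr_absz gtr0_norm ?denq_gt0 // rmorphM /=.
have -> : (((2 ^ K)%N%:Z)%:~R : rat) = 2%:Q ^+ K by rewrite -natrX.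
by field; rewrite intr_eq0 denq_neq0 expf_neq0.
Qed.

Lemma Z2_of_abs2_le x K : abs2 x <= (2%:Q ^+ K)^-1 -> Z2 (x / 2%:Q ^+ K).
Proof.
have [-> _|x_neq0 /(logn2_abs2_le x_neq0) log_le] := eqVneq x 0.
  by exists 0, 1%N; rewrite !mul0r.
have num_gt0 : (0 < `|numq x|)%N by rewrite absz_gt0 numq_eq0.
have den_gt0 : (0 < `|denq x|)%N by rewrite absz_gt0 denq_neq0.
have log_den0 : logn 2 `|denq x| = 0%N.
  apply/eqP; rewrite -leqn0 leqNgt; apply/negP => log_den_gt0.
  have log_num_gt0 : (0 < logn 2 `|numq x|)%N.
    exact: leq_trans log_den_gt0 (leq_trans (leq_addr _ _) log_le).
  move: log_den_gt0 log_num_gt0; rewrite !logn_gt0 !mem_primes /=.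
  move=> /andP [_ dvd_den] /andP [_ dvd_num].
  have := coprime_num_den x; rewrite /coprime => /eqP gcd1.
  by have := dvdn_gcd 2 `|numq x| `|denq x|; rewrite dvd_num dvd_den gcd1.
apply: Z2_div_pow2.
  by move: log_den0 => /eqP; rewrite -leqn0 leqNgt logn_gt0 mem_primes den_gt0 /= dvdn2 negbK.
by rewrite pfactor_dvdn // (leq_trans _ log_le) // leq_addl.
Qed.

Definition g (t w : rat) : rat := (3 * t * w ^+ 2 * (w - 3) + 8) / 4.

Lemma f_scale t z : 2 * f t z = g t (2 * z).
Proof. by rewrite /f /g; field. Qed.

Lemma iter_f_scale t m z : 2 * iter m (f t) z = iter m (g t) (2 * z).
Proof. by elim: m => [|m IH] //=; rewrite f_scale IH. Qed.

Lemma g_eq t w v : 3 * t * w ^+ 2 * (w - 3) + 8 = 4 * v -> g t w = v.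
Proof. by move=> eq_v; rewrite /g eq_v; field. Qed.

Lemma g_two t : g t 2 = 2 - 3 * t.
Proof. by apply: g_eq; ring. Qed.

Definition mod8_57 (b : rat) := exists2 y, Z2 y & b = 5 + 8 * y \/ b = 7 + 8 * y.

Definition trap (w : rat) :=
  exists2 y, Z2 y & [\/ w = 19 + 32 * y, w = 6 + 8 * y | w = 4 + 8 * y].

Definition integral_orbit (t w : rat) := forall j, Z2 (iter j (g t) w).

Lemma mod8_57_Z2 b : mod8_57 b -> Z2 b.
Proof. by move=> [y Zy [->| ->]]; z2. Qed.

Lemma trap_Z2 w : trap w -> Z2 w.
Proof. by move=> [y Zy [->| ->| ->]]; z2. Qed.

Lemma mod8_57_trap b : mod8_57 b -> trap (-1 + b).
Proof.
move=> [y Zy [->| ->]]; exists y => //.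
- by apply: Or33; ring.
- by apply: Or32; ring.
Qed.

Lemma g_repel t M c b : Z2 M -> Z2 c -> t = 1 + 16 * M * c -> mod8_57 b ->
  exists2 b', mod8_57 b' & g t (-1 + 4 * M * b) = -1 + M * b'.
Proof.
move=> ZM Zc -> [y Zy [->| ->]].
- pose Y := 16 + 27 * y + 54 * M * c * (5 + 8 * y) - 6 * c
    - 9 * (1 + 16 * M * c) * M * (5 + 8 * y) ^+ 2
    + 6 * (1 + 16 * M * c) * M ^+ 2 * (5 + 8 * y) ^+ 3.
  exists (7 + 8 * Y); first by exists Y; [rewrite /Y; z2 | right].
  by apply: g_eq; rewrite /Y; ring.
- pose Y := 23 + 27 * y + 54 * M * c * (7 + 8 * y) - 6 * c
    - 9 * (1 + 16 * M * c) * M * (7 + 8 * y) ^+ 2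
    + 6 * (1 + 16 * M * c) * M ^+ 2 * (7 + 8 * y) ^+ 3.
  exists (5 + 8 * Y); first by exists Y; [rewrite /Y; z2 | left].
  by apply: g_eq; rewrite /Y; ring.
Qed.

Lemma g_trap t c w : Z2 c -> t = 1 + 32 * c -> trap w -> trap (g t w).
Proof.
move=> Zc -> [y Zy [->| ->| ->]].
- pose W := 45 + 152 * y + 128 * y ^+ 2.
  pose Z := y + 4 * (4 * c + W + 32 * c * W) * (1 + 2 * y).
  exists (1 + 3 * Z); first by rewrite /Z /W; z2.
  by apply: Or32; apply: g_eq; rewrite /Z /W; ring.
- have [y1 Zy1 [y_even|y_odd]] := Z2_even_or_odd Zy.
  + pose Y := 2 + 27 * y1 + 90 * y1 ^+ 2 + 12 * y ^+ 3
      + c * (81 + 432 * y + 720 * y ^+ 2 + 384 * y ^+ 3).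
    exists Y; first by rewrite /Y; z2.
    by apply: Or31; apply: g_eq; rewrite /Y y_even; ring.
  + pose Y := 38 + 117 * y1 + 90 * y1 ^+ 2 + 12 * y ^+ 3
      + c * (81 + 432 * y + 720 * y ^+ 2 + 384 * y ^+ 3).
    exists Y; first by rewrite /Y; z2.
    by apply: Or31; apply: g_eq; rewrite /Y y_odd; ring.
- pose q := y + y ^+ 2.
  pose Z := 8 * c + q + 2 * y + 32 * c * q + 64 * c * y + 8 * q * y + 256 * c * q * y.
  exists (1 + 6 * Z); first by rewrite /Z /q; z2.
  by apply: Or32; apply: g_eq; rewrite /Z /q; ring.
Qed.

Lemma integral_orbit_cons t w : Z2 w -> integral_orbit t (g t w) -> integral_orbit t w.
Proof. by move=> Zw orbit_gw [|j] //; rewrite iterSr; apply: orbit_gw. Qed.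

Section Trapping.

Variables t c : rat.
Hypothesis Zc : Z2 c.
Hypothesis t_eq : t = 1 + 32 * c.

Lemma trap_integral_orbit w : trap w -> integral_orbit t w.
Proof.
move=> trap_w j; apply: trap_Z2.
by elim: j => [|j IH] //=; apply: g_trap Zc t_eq IH.
Qed.

Lemma integral_orbit_repel m b d : Z2 d -> t = 1 + 4 ^+ m.+1 * d -> mod8_57 b ->
  integral_orbit t (-1 + 4 ^+ m * b).
Proof.
elim: m b d => [|m IH] b d Zd t_eq' b57.
  by rewrite expr0 mul1r; apply/trap_integral_orbit/mod8_57_trap.
have Zb := mod8_57_Z2 b57.
apply: integral_orbit_cons; first by z2.
have t_eq'' : t = 1 + 16 * 4 ^+ m * d by rewrite t_eq' !exprS; ring.
rewrite exprS.
have [b' b'57 ->] := g_repel (Z2_exp m (Z2_nat 4)) Zd t_eq'' b57.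
by apply: (IH b' (4 * d)); [z2 | rewrite t_eq' !exprS; ring |].
Qed.

End Trapping.

Lemma g_g_two t r eta : mod8_57 eta -> t = 1 + 4 ^+ r.+3 * eta ->
  exists2 b, mod8_57 b & g t (g t 2) = -1 + 4 ^+ r.+2 * b.
Proof.
move=> [s Zs eta_eq].
pose R : rat := 4 ^+ r; have ZR : Z2 R by rewrite /R; z2.
have -> : 4 ^+ r.+3 = 64 * R by rewrite /R !exprS; ring.
have -> : 4 ^+ r.+2 = 16 * R by rewrite /R !exprS; ring.
move=> t_eq.
pose d := - (24 * R * eta).
pose Y0 := - 93 * s - 648 * R * eta ^+ 2 + 54 * t * eta * d - 72 * t * eta * d ^+ 2.
have Zeta : Z2 eta by case: eta_eq => ->; z2.
have ZY0 : Z2 Y0 by rewrite /Y0 /d t_eq; z2.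
rewrite g_two; case: eta_eq => eta_eq.
- exists (7 + 8 * (Y0 - 59)); first by exists (Y0 - 59); [z2 | right].
  by apply: g_eq; rewrite /Y0 /d t_eq eta_eq; ring.
- exists (5 + 8 * (Y0 - 82)); first by exists (Y0 - 82); [z2 | left].
  by apply: g_eq; rewrite /Y0 /d t_eq eta_eq; ring.
Qed.

Lemma integral_orbit_two t n eta : (3 <= n)%N -> mod8_57 eta -> t = 1 + 4 ^+ n * eta ->
  integral_orbit t 2.
Proof.
move=> n_ge3 eta57; rewrite -(subnK n_ge3) addn3 => t_eq.
have Zeta := mod8_57_Z2 eta57.
have t_32 : t = 1 + 32 * (2 * 4 ^+ (n - 3) * eta) by rewrite t_eq !exprS; ring.
have [b b57 g_g_eq] := g_g_two eta57 t_eq.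
apply: integral_orbit_cons; first exact: (Z2_nat 2).
apply: integral_orbit_cons; first by rewrite g_two t_eq; z2.
rewrite g_g_eq; apply: (integral_orbit_repel _ t_32 Zeta) => //; z2.
Qed.

Lemma integral_orbit_in_disk t n e : (3 <= n)%N -> e = 5 \/ e = 7 ->
  abs2 (t - (1 + e * 2%:Q ^+ (2 * n))) <= radius n -> integral_orbit t 2.
Proof.
move=> n_ge3 e57 /Z2_of_abs2_le; set s := _ / _ => Zs.
apply: (integral_orbit_two n_ge3 (eta := e + 8 * s)).
  by exists s => //; case: e57 => ->; [left|right].
have -> : (4 : rat) ^+ n = 2%:Q ^+ (2 * n) by rewrite exprM; congr (_ ^+ _); rewrite expr2.
by rewrite /s exprD; field; rewrite expf_neq0.
Qed.

Lemma pcb_of_integral_orbits (t : nat -> rat) N :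
  (forall k, (N <= k)%N -> integral_orbit (t k) 2) -> pcb t.
Proof.
move=> orbit_t.
have orbit1_le k m : (N <= k)%N -> abs2 (iter m (f (t k)) 1) <= 2.
  move=> le_Nk; have := abs2_half_le (orbit_t k le_Nk m).
  by rewrite -[X in iter _ _ X]mulr1 -iter_f_scale mulrC mulKf.
split; exists 2 => m; exists N => k le_Nk.
- case: m => [|m]; first by rewrite /orbit /abs2 eqxx.
  change (abs2 (iter m.+1 (f (t k)) 0) <= 2).
  rewrite iterSr (_ : f (t k) 0 = 1) ?orbit1_le //.
  by rewrite /f; ring.
- exact: orbit1_le.
Qed.

Theorem mainTheorem5 (t : nat -> rat) :
  cauchy2 t ->
  (exists n : nat, (3 <= n)%N /\
     (in_cdisk t (center_a n) (radius n) \/ in_cdisk t (center_b n) (radius n))) ->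
  pcb t.
Proof.
(* Every approximant t k near the center already has an integral orbit. *)
move=> _ [n [n_ge3 in_disk]].
have [e e57 [N near_center]] : exists2 e, e = 5 \/ e = 7 &
    in_cdisk t (1 + e * 2%:Q ^+ (2 * n)) (radius n).
  by case: in_disk => ?; [exists 5; [left|] | exists 7; [right|]].
apply: (@pcb_of_integral_orbits _ N) => k le_Nk.
exact: integral_orbit_in_disk n_ge3 e57 (near_center k le_Nk).
Qed.
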